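(* Let $n,g,k$ be integers with $1\leq g\leq \left\lfloor \frac{n-k-2}{2}\right\rfloor$ and $1\leq k\leq n-2g-2$. Let $s(n,k)=\min\{|E(G)| : G\in\mathscr{G}(n,k)\}$, where $\mathscr{G}(n,k)$ is the set of all connected graphs of order $n$ with $g$-good-neighbor connectivity $\kappa^g(G)=k$. Then: (1) if $g=1$, then $s(n,k)=n-1$; (2) if $n-k$ is even and $g\geq 2$, then $s(n,k)=\frac{(n-k)g}{2}+k+1$; (3) if $n-k$ is odd and $g\geq 2$, then $s(n,k)=\frac{(n-k)g+1}{2}+k+1$.
   Context: For a connected graph $G=(V,E)$ and integer $g\ge0$: a set $F\subseteq V$ is a $g$-good-neighbor faulty set if $|N(v)\cap (V-F)|\geq g$ for every $v\in V-F$; a $g$-good-neighbor cut is such an $F$ with $G-F$ disconnected; $\kappa^g(G)$ is the minimum cardinality of a $g$-good-neighbor cut (defined only when such a cut exists). *)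

From mathcomp Require Import all_boot.
Set Implicit Arguments. Unset Strict Implicit. Unset Printing Implicit Defensive.

Definition simple_graph (T : finType) (e : rel T) : Prop :=
  symmetric e /\ irreflexive e.

Definition nedges (n : nat) (e : rel 'I_n) : nat :=
  #|[set p : 'I_n * 'I_n | (p.1 < p.2)%N && e p.1 p.2]|.

Definition del_rel (T : finType) (e : rel T) (F : {set T}) : rel T :=
  [rel x y | [&& x \notin F, y \notin F & e x y]].

Definition gconnected (T : finType) (e : rel T) : Prop :=
  forall x y : T, connect e x y.

Definition del_connected (T : finType) (e : rel T) (F : {set T}) : Prop :=
  forall x y : T, x \notin F -> y \notin F -> connect (del_rel e F) x y.

Definition good_neighbor_faulty (T : finType) (e : rel T) (g : nat)
  (F : {set T}) : Prop :=
  forall v : T, v \notin F -> (g <= #|[set u | e v u & u \notin F]|)%N.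

Definition good_neighbor_cut (T : finType) (e : rel T) (g : nat)
  (F : {set T}) : Prop :=
  good_neighbor_faulty e g F /\ ~ del_connected e F.

Definition gn_connectivity_eq (T : finType) (e : rel T) (g k : nat) : Prop :=
  (exists F : {set T}, good_neighbor_cut e g F /\ #|F| = k) /\
  (forall F : {set T}, good_neighbor_cut e g F -> (k <= #|F|)%N).

Definition in_class (n : nat) (g k : nat) (e : rel 'I_n) : Prop :=
  simple_graph e /\ gconnected e /\ gn_connectivity_eq e g k.

Definition min_edges_is (n g k m : nat) : Prop :=
  (exists e : rel 'I_n, @in_class n g k e /\ nedges e = m) /\
  (forall e : rel 'I_n, @in_class n g k e -> (m <= nedges e)%N).

From mathcomp Require Import all_boot zify.
Set Implicit Arguments. Unset Strict Implicit. Unset Printing Implicit Defensive.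

(* Lower bound: if F is a g-good-neighbor cut with |F| = k, every vertex of G - F keeps
   at least g neighbours, so G - F has at least ((n - k) g + 1) / 2 edges; contracting each
   component of G - F and keeping the vertices of F leaves a connected graph on at least
   k + 2 points, so at least k + 1 further edges meet F.  For g = 1 the spanning-tree
   bound n - 1 is stronger.
   Upper bound: a hub with k - 1 pendant vertices, joined to the roots of two disjoint
   blocks on g + 1 and n - k - g - 1 vertices, each a circulant of minimum degree g with
   the fewest possible edges (a star when g = 1).  The hub and the pendants form a
   g-good-neighbor cut of size k.  Any g-good-neighbor cut contains the hub, because a
   non-root block vertex has fewer than g higher neighbours and can therefore always step
   down towards its root inside G - F; it then contains the pendants, whose only
   neighbour is the hub. *)

Lemma card_le_size (T : finType) (U : eqType) (f : T -> U) (A : {set T}) (s : seq U) :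
  injective f -> {in A, forall x, f x \in s} -> #|A| <= size s.
Proof.
move=> f_inj fAs; rewrite cardE -(size_map f); apply: uniq_leq_size.
  by rewrite map_inj_uniq // enum_uniq.
by move=> y /mapP [x]; rewrite mem_enum => /fAs + ->.
Qed.

Lemma size_le_card n (A : {set 'I_n}) (s : seq nat) :
  uniq s -> {in s, forall w, exists2 x : 'I_n, x \in A & val x = w} -> size s <= #|A|.
Proof.
move=> s_uniq sA; rewrite cardE -(size_map val); apply: uniq_leq_size => // w /sA [x xA <-].
by rewrite map_f ?mem_enum.
Qed.

Lemma count_le_size (T : eqType) (p : pred T) (t s : seq T) :
  uniq t -> {in t, forall x, p x -> x \in s} -> count p t <= size s.
Proof.
move=> t_uniq pts; rewrite -size_filter; apply: uniq_leq_size (filter_uniq _ t_uniq) _.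
by move=> x; rewrite mem_filter => /andP [px xt]; exact: pts.
Qed.

Lemma size_le_count (T : eqType) (p : pred T) (t s : seq T) :
  uniq s -> {in s, forall x, p x && (x \in t)} -> size s <= count p t.
Proof.
by move=> s_uniq spt; rewrite -size_filter; apply: uniq_leq_size => // x /spt; rewrite mem_filter.
Qed.

Lemma count_iotaD (p : pred nat) a b :
  count p (iota 0 (a + b)) = count p (iota 0 a) + count (fun j => p (a + j)) (iota 0 b).
Proof.
by rewrite iotaD count_cat; have := iotaDl a 0 b; rewrite addn0 => ->; rewrite count_map.
Qed.

Definition edge_set n (e : rel 'I_n) := [set q : 'I_n * 'I_n | (q.1 < q.2) && e q.1 q.2].

Definition cross_edges n (e : rel 'I_n) (aT : eqType) (p : 'I_n -> aT) :=
  [set q in edge_set e | p q.1 != p q.2].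

Lemma cross_edges0_eq n (e : rel 'I_n) (aT : eqType) (p : 'I_n -> aT) :
  symmetric e -> cross_edges e p = set0 -> forall u v, e u v -> p u = p v.
Proof.
move=> esym cross0 u v euv; apply/eqP/negPn/negP => puv.
have [uv | vu | /val_inj uv] := ltngtP u v; last by rewrite uv eqxx in puv.
- by have := in_set0 (u, v); rewrite -cross0 !inE /= uv euv puv.
- by have := in_set0 (v, u); rewrite -cross0 !inE /= vu esym euv eq_sym puv.
Qed.

Lemma card_imset_le_cross_edges n (e : rel 'I_n) (aT : finType) (p : 'I_n -> aT) :
  symmetric e -> gconnected e -> #|p @: setT| <= #|cross_edges e p|.+1.
Proof.
move=> esym econ; move Hs : #|p @: setT| => s.
elim: s p Hs => [//|s IH] p Hs.
have [cross0 | [[x y] xy_cross]] := set_0Vmem (cross_edges e p).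
  have p_const u v : p u = p v.
    have p_closed : closed e [pred w | p u == p w].
      by move=> w z /(cross_edges0_eq esym cross0) pwz; rewrite !inE pwz.
    apply/eqP; rewrite -[_ == _]/(v \in [pred w | p u == p w]).
    by rewrite -(closed_connect p_closed (econ u v)) inE.
  rewrite cross0 cards0 -Hs; apply/card_le1P => _ /imsetP [x _ ->] w; rewrite inE.
  by apply/imsetP/eqP => [[z _ ->] | ->]; [exact: p_const | exists x].
(* Merging the class of [y] into that of [x] loses one class and at least one crossing edge. *)
pose p' z := if p z == p y then p x else p z.
have img' : p' @: setT = (p @: setT) :\ p y.
  apply/setP => w; rewrite in_setD1; apply/imsetP/andP => [[z _ ->] | [wy /imsetP [z _ wz]]].
    rewrite /p'; case: ifP => [_ | /negbT pzy]; last by rewrite pzy imset_f.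
    by move: xy_cross; rewrite !inE => /andP [_ ->]; rewrite imset_f.
  by exists z => //; rewrite /p' -wz (negbTE wy).
have card' : #|p' @: setT| = s.
  by move: Hs; rewrite img' (cardsD1 (p y)) imset_f // => -[].
have cross' : cross_edges e p' \proper cross_edges e p.
  apply/properP; split; last first.
    by exists (x, y) => //; rewrite !inE /p' /= eqxx; case: ifP; rewrite eqxx !andbF.
  apply/subsetP => q; rewrite !inE => /andP [-> pq] /=; apply: contraNneq pq => pq.
  by rewrite /p' pq.
by have := IH _ card'; have := proper_card cross'; lia.
Qed.

Lemma nedges_ge_connected n (e : rel 'I_n) : symmetric e -> gconnected e -> n - 1 <= nedges e.
Proof.
move=> esym econ; rewrite leq_subLR add1n.
have := card_imset_le_cross_edges id esym econ; rewrite imset_id cardsT card_ord.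
by move=> /leq_trans; apply; rewrite ltnS; apply/subset_leq_card/subsetP => q /setIdP [].
Qed.

Lemma double_nedges n (e : rel 'I_n) : simple_graph e ->
  2 * nedges e = \sum_x #|[set y | e x y]|.
Proof.
case=> esym eirr.
have -> : \sum_x #|[set y | e x y]| = #|[set q : 'I_n * 'I_n | e q.1 q.2]|.
  rewrite -sum1_card (eq_bigl (fun q : 'I_n * 'I_n => true && e q.1 q.2)) => [|q]; last first.
    by rewrite inE.
  rewrite -(pair_big_dep xpredT (fun i j => e i j) (fun _ _ => 1)).
  by apply: eq_bigr => x _; rewrite -sum1_card; apply: eq_bigl => y; rewrite inE.
rewrite -(cardsID [set q : 'I_n * 'I_n | q.1 < q.2]) /nedges -/(edge_set e).
have -> : [set q : 'I_n * 'I_n | e q.1 q.2] :&: [set q : 'I_n * 'I_n | q.1 < q.2] = edge_set e.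
  by apply/setP => q; rewrite !inE andbC.
have -> : [set q : 'I_n * 'I_n | e q.1 q.2] :\: [set q : 'I_n * 'I_n | q.1 < q.2] =
          (fun q : 'I_n * 'I_n => (q.2, q.1)) @: edge_set e.
  apply/setP => -[a b]; rewrite !inE /=; apply/andP/imsetP => [[ba eab] | [[c d]]].
    exists (b, a); rewrite // inE /= esym eab andbT ltn_neqAle leqNgt ba andbT.
    by apply: contraTneq eab => /val_inj ->; rewrite eirr.
  by rewrite inE /= => /andP [cd ecd] [-> ->]; rewrite -leqNgt ltnW // esym.
by rewrite card_imset ?mul2n ?addnn // => -[a b] [c d] [-> ->].
Qed.

Lemma del_rel_simple (T : finType) (e : rel T) F : simple_graph e -> simple_graph (del_rel e F).
Proof.
case=> esym eirr; split => [u v | u]; last by rewrite /del_rel /= eirr !andbF.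
by rewrite /del_rel /= esym andbCA.
Qed.

Lemma nedges_del_ge_faulty n (e : rel 'I_n) g F : simple_graph e ->
  good_neighbor_faulty e g F -> (n - #|F|) * g <= 2 * nedges (del_rel e F).
Proof.
move=> e_simple F_good; rewrite (double_nedges (del_rel_simple F e_simple)).
rewrite (bigID (mem F)) /= -[X in X <= _]addn0 addnC leq_add //.
have -> : n - #|F| = #|~: F| by have := cardsC F; rewrite card_ord; lia.
rewrite -sum_nat_const (eq_bigl (fun x => x \notin F)) => [|x]; last by rewrite inE.
apply: leq_sum => x xF.
apply: leq_trans (F_good x xF) (subset_leq_card _); apply/subsetP => y.
by rewrite !inE /del_rel /= xF => /andP [-> ->].
Qed.

Lemma nedges_ge_del_disconnected n (e : rel 'I_n) F : simple_graph e -> gconnected e ->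
  ~ del_connected e F -> nedges (del_rel e F) + #|F| + 1 <= nedges e.
Proof.
move=> e_simple econ F_disc; set d := del_rel e F.
have [[x0 y0] /and3P [/= x0F y0F x0y0] | connected] :=
  pickP [pred q : 'I_n * 'I_n | [&& q.1 \notin F, q.2 \notin F & ~~ connect d q.1 q.2]].
  2: by case: F_disc => x y xF yF; move: (connected (x, y)); rewrite /= xF yF => /negbFE.
pose p z := if z \in F then z else if connect d x0 z then x0 else y0.
have card_p : #|F| + 2 <= #|p @: setT|.
  have -> : #|F| + 2 = #|F :|: [set x0; y0]|.
    rewrite cardsU cards2 (_ : x0 != y0) ?(@disjoint_setI0 _ F) ?cards0 ?addn2 ?subn0 //.
      rewrite disjoints_subset; apply/subsetP => z; rewrite !inE.
      by apply: contraL => /orP [] /eqP ->.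
    by apply: contraNneq x0y0 => <-; exact: connect0.
  apply/subset_leq_card/subsetP => z; rewrite !inE => /orP [zF | /orP [] /eqP ->].
  - by apply/imsetP; exists z; rewrite /p ?zF.
  - by apply/imsetP; exists x0; rewrite /p ?(negbTE x0F) ?connect0.
  - by apply/imsetP; exists y0; rewrite /p ?(negbTE y0F) ?(negbTE x0y0).
have d_sub : edge_set d \subset edge_set e.
  by apply/subsetP => q; rewrite !inE /d /del_rel /= => /and4P [-> _ _ ->].
have cross_sub : cross_edges e p \subset edge_set e :\: edge_set d.
  apply/subsetP => q; rewrite !inE => /andP [/andP [q12 eq] pq]; rewrite q12 eq.
  rewrite /= andbT; apply: contra pq => dq; have /and3P [q1F q2F _] := dq.
  have [dsym _] := del_rel_simple F e_simple.
  rewrite /p (negbTE q1F) (negbTE q2F).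
  by rewrite (same_connect_r (sym_connect_sym dsym) (connect1 dq)).
rewrite /nedges -/(edge_set e) -/(edge_set d) -(cardsID (edge_set d) (edge_set e)).
rewrite (setIidPr d_sub) -addnA leq_add2l addn1; apply: leq_trans (subset_leq_card cross_sub).
by have := leq_trans card_p (card_imset_le_cross_edges p e_simple.1 econ); rewrite addn2.
Qed.

Lemma nedges_ge_cut n (e : rel 'I_n) g F : simple_graph e -> gconnected e ->
  good_neighbor_cut e g F -> ((n - #|F|) * g + 1) %/ 2 + #|F| + 1 <= nedges e.
Proof.
move=> e_simple econ [F_good F_disc].
have := nedges_del_ge_faulty e_simple F_good.
have := nedges_ge_del_disconnected e_simple econ F_disc; lia.
Qed.

Lemma nedges_ge_in_class n g k (e : rel 'I_n) :
  in_class g k e -> ((n - k) * g + 1) %/ 2 + k + 1 <= nedges e.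
Proof. by case=> e_simple [econ [[F [F_cut <-]] _]]; exact: nedges_ge_cut. Qed.

(* The roots [rs] are the vertices to be joined to a hub.  Since every other vertex has
   fewer than g higher neighbours, one that keeps g neighbours outside a faulty set can
   always step down to a lower one. *)
Record rooted_block (b g E : nat) (rs : seq nat) (f : rel nat) : Prop := RootedBlock {
  block_sym : symmetric f;
  block_irr : irreflexive f;
  block_deg : forall i, i < b -> g <= count (f i) (iota 0 b);
  block_up : forall i, i < b -> i \notin rs -> count (fun j => (i < j) && f i j) (iota 0 b) < g;
  block_cover : exists2 s : seq (nat * nat), size s <= E &
    forall i j, i < j < b -> f i j -> (i, j) \in s }.

Definition block_sum (a : nat) (fa fb : rel nat) : rel nat :=
  fun i j => if i < a then (j < a) && fa i j else (a <= j) && fb (i - a) (j - a).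

Lemma block_sum_split a fa fb i j : block_sum a fa fb i j -> (i < a) = (j < a).
Proof. by rewrite /block_sum; case: ifP => [_ /andP [-> _] | _ /andP [aj _]] //; lia. Qed.

Lemma rooted_block_sum a b g Ea Eb rsa rsb fa fb :
  rooted_block a g Ea rsa fa -> rooted_block b g Eb rsb fb ->
  rooted_block (a + b) g (Ea + Eb) (rsa ++ map (addn a) rsb) (block_sum a fa fb).
Proof.
case=> fa_sym fa_irr fa_deg fa_up [sa sa_size sa_cover].
case=> fb_sym fb_irr fb_deg fb_up [sb sb_size sb_cover].
have count_lo p i : i < a -> count (fun j => p j && block_sum a fa fb i j) (iota 0 (a + b)) =
    count (fun j => p j && fa i j) (iota 0 a).
  move=> ia; rewrite count_iotaD /block_sum ia.
  rewrite [count _ (iota 0 b)](eq_count (a2 := pred0)).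
    by rewrite count_pred0 addn0; apply: eq_in_count => j; rewrite mem_iota => /andP [_ ->].
  by move=> j /=; rewrite ltnNge leq_addr andbF.
have count_hi p i : a <= i -> count (fun j => p j && block_sum a fa fb i j) (iota 0 (a + b)) =
    count (fun j => p (a + j) && fb (i - a) j) (iota 0 b).
  move=> ai; rewrite count_iotaD /block_sum ltnNge ai /=.
  rewrite [count _ (iota 0 a)](eq_in_count (a2 := pred0)).
    by rewrite count_pred0; apply: eq_count => j; rewrite leq_addr addKn.
  by move=> j; rewrite mem_iota => /andP [_ ja] /=; rewrite leqNgt ja andbF.
split.
- move=> i j; rewrite /block_sum fa_sym fb_sym.
  by case: (ltnP i a) => ia; case: (ltnP j a) => ja.
- by move=> i; rewrite /block_sum; case: ifP => _; rewrite ?fa_irr ?fb_irr andbF.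
- move=> i ib; case: (ltnP i a) => ia.
    by have /= -> := count_lo xpredT i ia; exact: fa_deg.
  by have /= -> := count_hi xpredT i ia; apply: fb_deg; lia.
- move=> i ib; rewrite mem_cat negb_or => /andP [ia_root ib_root]; case: (ltnP i a) => ia.
    by rewrite (count_lo (leq i.+1)) // fa_up.
  rewrite (count_hi (leq i.+1)) // (eq_count (a2 := fun j => (i - a < j) && fb (i - a) j)).
    apply: fb_up; first lia.
    by apply: contra ib_root => ?; apply/mapP; exists (i - a); rewrite ?subnKC.
  by move=> j; congr (_ && _); lia.
exists (sa ++ [seq (a + q.1, a + q.2) | q <- sb]); first by rewrite size_cat size_map; lia.
move=> i j /andP [ij jab]; rewrite /block_sum mem_cat; case: (ltnP i a) => ia.
  by case/andP => ja /(sa_cover _ _ (introT andP (conj ij ja))) ->.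
move=> /andP [_ fij]; apply/orP; right; apply/mapP; exists (i - a, j - a) => /=.
  by apply: sb_cover fij; lia.
by congr pair; lia.
Qed.

Lemma card_ord_lt n k : k <= n -> #|[set x : 'I_n | x < k]| = k.
Proof.
move=> kn; apply/eqP; rewrite eqn_leq; apply/andP; split.
  rewrite -{2}(size_iota 0 k); apply: card_le_size val_inj _ => x.
  by rewrite inE mem_iota.
rewrite -{1}(size_iota 0 k); apply: size_le_card (iota_uniq 0 k) _ => w.
rewrite mem_iota add0n => wk; have wn : w < n by lia.
by exists (Ordinal wn); rewrite ?inE.
Qed.

Section Glue.
Variables (n k b g E : nat) (rs : seq nat) (f : rel nat).
Hypotheses (k_gt0 : 0 < k) (n_eq : n = k + b) (f_block : rooted_block b g E rs f).

Definition hub_nbr (y : nat) := (0 < y < k) || (k <= y) && (y - k \in rs).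

(* Vertex 0 is the hub, 1, ..., k - 1 hang from it, and the block sits on k, ..., n - 1. *)
Definition glued : rel 'I_n := fun x y =>
  [|| (x == 0 :> nat) && hub_nbr y, (y == 0 :> nat) && hub_nbr x |
      [&& k <= x, k <= y & f (x - k) (y - k)]].

Lemma glued_simple : simple_graph glued.
Proof.
split => [x y | x]; last first.
  by rewrite /glued (block_irr f_block) !andbF orbF orbb /hub_nbr; apply/negbTE; lia.
rewrite /glued (block_sym f_block (x - k)) orbCA; congr [|| _, _ | _].
by rewrite andbCA.
Qed.

Lemma glued_nedges : nedges glued <= k - 1 + size rs + E.
Proof.
have [s s_size s_cover] := block_cover f_block.
pose cover := [seq (0, y) | y <- iota 1 (k - 1)] ++ [seq (0, k + j) | j <- rs] ++
              [seq (k + q.1, k + q.2) | q <- s].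
apply: leq_trans (_ : size cover <= _); last by rewrite !size_cat !size_map size_iota; lia.
apply: (card_le_size (f := fun q : 'I_n * 'I_n => (val q.1, val q.2))).
  by move=> [x1 y1] [x2 y2] /= [/val_inj -> /val_inj ->].
move=> [x y]; rewrite inE /= => /andP [xy]; rewrite /glued /hub_nbr !mem_cat.
case/or3P => [/andP [/eqP x0 /orP [yk | /andP [ky yrs]]] | | /and3P [kx ky fxy]]; try lia.
- by apply/orP; left; apply/mapP; exists (y : nat); rewrite ?x0 // mem_iota; lia.
- apply/orP; right; apply/orP; left; apply/mapP; exists (y - k) => //.
  by rewrite x0 subnKC.
- apply/orP; right; apply/orP; right; apply/mapP; exists (x - k, y - k); last by rewrite /= !subnKC.
  by apply: s_cover fxy; have := ltn_ord y; lia.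
Qed.

Let n_gt0 : 0 < n. Proof. lia. Qed.
Let hub : 'I_n := Ordinal n_gt0.

Definition pendant_cut := [set x : 'I_n | x < k].

Lemma card_pendant_cut : #|pendant_cut| = k.
Proof. by apply: card_ord_lt; lia. Qed.

Lemma glued_body_deg (v : 'I_n) : k <= v -> g <= #|[set u | glued v u & k <= u]|.
Proof.
move=> kv; have vb : v - k < b by have := ltn_ord v; lia.
apply: leq_trans (block_deg f_block vb) _; rewrite -size_filter -(size_map (addn k)).
apply: size_le_card => [|w /mapP [j]].
  by rewrite map_inj_uniq ?filter_uniq ?iota_uniq //; exact: addnI.
rewrite mem_filter mem_iota => /andP [fvj jb] ->; have kjn : k + j < n by lia.
by exists (Ordinal kjn); rewrite // !inE /glued /= leq_addr kv addKn fvj !orbT.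
Qed.

Lemma glued_reach (F : {set 'I_n}) : hub \notin F ->
  (forall v : 'I_n, v \notin F -> k <= v -> g <= #|[set u | glued v u & u \notin F]|) ->
  forall x, x \notin F -> connect (del_rel glued F) hub x.
Proof.
move=> hubF degF; set d := del_rel glued F.
suff reach u (x : 'I_n) : x = u :> nat -> x \notin F -> connect d hub x by move=> x; exact: reach.
elim/ltn_ind: u x => u IH x xu xF.
have [x_hub | x_nonhub] := boolP (hub_nbr x).
  by apply: connect1; rewrite /d /del_rel /= hubF xF /glued /= x_hub.
have [u0 | u_gt0] := posnP u.
  by have -> : x = hub by apply: val_inj; rewrite /= xu u0.
have kx : k <= x by move: x_nonhub; rewrite /hub_nbr; lia.
have x_nonroot : x - k \notin rs by move: x_nonhub; rewrite /hub_nbr kx; lia.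
have xb : x - k < b by have := ltn_ord x; lia.
apply/idPn => x_unreached; have := degF x xF kx; apply/negP; rewrite -ltnNge.
apply: leq_ltn_trans (block_up f_block xb x_nonroot).
rewrite -size_filter -(size_map (addn k)); apply: card_le_size val_inj _ => v.
rewrite !inE => /andP [xv vF].
have [kv fxv] : k <= v /\ f (x - k) (v - k) by move: xv; rewrite /glued /hub_nbr; lia.
apply/mapP; exists (v - k); last by rewrite subnKC.
rewrite mem_filter mem_iota fxv andbT; apply/andP; split; last by have := ltn_ord v; lia.
rewrite ltnNge leq_eqVlt; apply/negP => /orP [/eqP vx | vx].
  by move: fxv; rewrite vx (block_irr f_block).
have vu : v < u by lia.
case/negP: x_unreached; apply: connect_trans (IH _ vu v erefl vF) (connect1 _).
by rewrite /d /del_rel /= vF xF /glued /= kv kx (block_sym f_block) fxv !orbT.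
Qed.

Lemma glued_connected : gconnected glued.
Proof.
have [gsym _] := glued_simple.
have reach x : connect glued hub x.
  apply: (@connect_sub _ (del_rel glued set0)) => [u v /and3P [_ _ /connect1] // |].
  apply: glued_reach; rewrite ?inE // => v _ kv.
  apply: leq_trans (glued_body_deg kv) (subset_leq_card _).
  by apply/subsetP => u; rewrite !inE => /andP [-> _].
by move=> x y; rewrite (connect_trans _ (reach y)) // (sym_connect_sym gsym).
Qed.

Section Cut.
Variable c : nat.
Hypotheses (g_gt0 : 0 < g) (c_split : 0 < c < b).
Hypothesis f_split : forall i j, f i j -> (i < c) = (j < c).

Lemma pendant_cut_good : good_neighbor_cut glued g pendant_cut.
Proof.
split => [v | cut_conn].
  rewrite inE -leqNgt => kv; apply: leq_trans (glued_body_deg kv) (subset_leq_card _).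
  by apply/subsetP => u; rewrite !inE leqNgt.
have kn : k < n by lia.
have kcn : k + c < n by lia.
have low_closed : closed (del_rel glued pendant_cut) [pred x : 'I_n | x < k + c].
  move=> x y /and3P [xF yF]; move: xF yF; rewrite !inE -!leqNgt /glued /= => kx ky.
  by case/or3P => [| | /and3P [_ _ /f_split]]; lia.
have := cut_conn (Ordinal kn) (Ordinal kcn); rewrite !inE /= ltnn -leqNgt leq_addr.
by move=> /(_ erefl erefl) /(closed_connect low_closed); rewrite !inE /=; lia.
Qed.

Lemma glued_cut_ge F : good_neighbor_cut glued g F -> k <= #|F|.
Proof.
case=> F_good F_disc.
have [dsym _] := del_rel_simple F glued_simple.
have hubF : hub \in F.
  apply/negPn/negP => hubF; apply: F_disc => x y xF yF.
  have reach := glued_reach hubF (fun v vF _ => F_good v vF).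
  by rewrite (connect_trans _ (reach y yF)) // (sym_connect_sym dsym) reach.
have pendF (x : 'I_n) : x < k -> x \in F.
  have [-> // | x_gt0 xk] := eqVneq x hub.
  apply/negPn/negP => xF; have := F_good x xF; apply/negP; rewrite -ltnNge.
  apply: leq_trans g_gt0; rewrite ltnS leqn0 cards_eq0; apply/eqP/setP => u.
  rewrite !inE /glued /hub_nbr; apply/negbTE/negP => /andP [xu uF].
  have u0 : u = hub by apply: val_inj => /=; move: xu x_gt0; rewrite -(inj_eq val_inj) /=; lia.
  by rewrite u0 hubF in uF.
by rewrite -card_pendant_cut subset_leq_card //; apply/subsetP => x; rewrite inE => /pendF.
Qed.

Lemma glued_in_class : in_class g k glued.
Proof.
split; first exact: glued_simple.
split; first exact: glued_connected.
split; last exact: glued_cut_ge.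
by exists pendant_cut; split; [exact: pendant_cut_good | exact: card_pendant_cut].
Qed.
End Cut.
End Glue.

Definition star : rel nat := fun i j => (i != j) && ((i == 0) || (j == 0)).

Lemma star_block m : 1 < m -> rooted_block m 1 (m - 1) [:: 0] star.
Proof.
move=> m_gt1; split.
- by move=> i j; rewrite /star eq_sym orbC.
- by move=> i; rewrite /star eqxx.
- move=> i im; apply: (@size_le_count _ _ _ [:: (i == 0 : nat)]) => // j.
  by rewrite inE mem_iota /star => /eqP ->; case: (i =P 0); lia.
- move=> i im; rewrite inE => i0; apply: (@count_le_size _ _ _ [::]) (iota_uniq 0 m) _ => j _.
  by rewrite /star; lia.
exists [seq (0, j) | j <- iota 1 (m - 1)]; first by rewrite size_map size_iota.
move=> i j /andP [ij jm] /andP [_ /orP [/eqP i0 | /eqP j0]]; last lia.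
by apply/mapP; exists j; rewrite ?i0 // mem_iota; lia.
Qed.

Section Circulant.
Variables (m h r : nat).
Hypotheses (h_gt0 : 0 < h) (r_le1 : r <= 1) (m_gt : 2 * h + r < m).

Definition cshift i t := if i + t < m then i + t else i + t - m.
Definition coff i j := if i <= j then j - i else m + j - i.
Definition diam := (m + 1) %/ 2.

(* For odd degree each vertex also gets a chord of length about m / 2; when m is odd,
   vertex 0 gets two of them. *)
Definition is_offset i t :=
  [|| 0 < t <= h, m - h <= t < m |
      (r == 1) && ((i < diam) && (t == diam) || ((diam <= i) || (i == 0)) && (t == m - diam))].

Definition circulant : rel nat := fun i j => [&& i < m, j < m & is_offset i (coff i j)].

Lemma cshift_lt i t : i < m -> t < m -> cshift i t < m.
Proof. by rewrite /cshift; case: ifP; lia. Qed.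

Lemma cshiftK i t : i < m -> t < m -> coff i (cshift i t) = t.
Proof. by rewrite /cshift /coff; case: (ltnP (i + t) m); case: ifP; lia. Qed.

Lemma coffK i j : i < m -> j < m -> cshift i (coff i j) = j.
Proof. by rewrite /cshift /coff; case: (leqP i j); case: ifP; lia. Qed.

Lemma is_offset_sym i j : i < m -> j < m -> is_offset j (coff j i) = is_offset i (coff i j).
Proof.
rewrite /is_offset /coff /diam => im jm.
by case: (leqP i j) => ij; case: (leqP j i) => ji; apply/idP/idP; lia.
Qed.

Lemma circulant_sym : symmetric circulant.
Proof.
move=> i j; rewrite /circulant andbCA; case: (i < m) (j < m) (@is_offset_sym i j) => [] [] //.
by move=> ->.
Qed.

Lemma circulant_irr : irreflexive circulant.
Proof. by move=> i; rewrite /circulant /coff leqnn subnn /is_offset /diam; apply/negbTE; lia. Qed.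

Definition offsets i :=
  iota 1 h ++ iota (m - h) h ++
  (if r == 1 then [:: if i < diam then diam else m - diam] else [::]).

Lemma offsets_uniq i : uniq (offsets i).
Proof.
rewrite /offsets !cat_uniq !iota_uniq /=; apply/and3P; split.
- apply/hasPn => t; rewrite mem_cat !mem_iota /diam.
  by case: (r =P 1) => [r1 | _] /=; rewrite ?inE ?in_nil; [case: ifP |]; lia.
- by case: (r =P 1) => [r1 | _] //=; rewrite orbF mem_iota /diam; case: ifP; lia.
- by case: (r == 1).
Qed.

Lemma size_offsets i : size (offsets i) = 2 * h + r.
Proof. by rewrite /offsets !size_cat !size_iota; case: (r =P 1) => /= [|]; lia. Qed.

Lemma mem_offsets i t : t \in offsets i -> (t < m) && is_offset i t.
Proof.
rewrite /offsets /is_offset /diam !mem_cat !mem_iota.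
by case: (r =P 1) => [r1 | _] /=; rewrite ?inE ?in_nil; [case: ifP |]; lia.
Qed.

Lemma offsets_complete i t : 0 < i -> is_offset i t -> t \in offsets i.
Proof.
rewrite /offsets /is_offset /diam !mem_cat !mem_iota.
by case: (r =P 1) => [r1 | _] /=; rewrite ?inE ?in_nil; [case: ifP |]; lia.
Qed.

Definition chord i t := (minn i (cshift i t), maxn i (cshift i t)).

Definition chords :=
  [seq chord i t | i <- iota 0 m, t <- iota 1 h] ++
  (if r == 1 then [seq chord i diam | i <- iota 0 diam] else [::]).

Lemma size_chords : size chords = (m * (2 * h + r) + 1) %/ 2.
Proof.
rewrite /chords size_cat size_allpairs !size_iota /diam.
by case: (r =P 1) => [-> | r0] /=; rewrite ?size_map ?size_iota; [|have -> : r = 0 by lia]; lia.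
Qed.

Lemma circulant_chord_cases i j : i < j < m -> circulant i j ->
  [|| 0 < coff i j <= h, 0 < coff j i <= h,
      [&& r == 1, i < diam & coff i j == diam] | [&& r == 1, j < diam & coff j i == diam]].
Proof.
move=> /andP [ij jm] cij; have := cij; rewrite circulant_sym.
by move: cij; rewrite /circulant /is_offset /coff /diam; do 2 case: ifP; lia.
Qed.

Lemma circulant_block :
  rooted_block m (2 * h + r) ((m * (2 * h + r) + 1) %/ 2) [:: 0] circulant.
Proof.
split; [exact: circulant_sym | exact: circulant_irr | | |].
- move=> i im; rewrite -(size_offsets i) -(size_map (cshift i)).
  apply: size_le_count => [|j /mapP [t /mem_offsets /andP [tm t_off] ->]].
    rewrite map_inj_in_uniq ?offsets_uniq // => t1 t2 /mem_offsets /andP [t1m _].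
    by move=> /mem_offsets /andP [t2m _] /(congr1 (coff i)); rewrite !cshiftK.
  by rewrite /circulant im cshift_lt // cshiftK // t_off mem_iota cshift_lt.
- move=> i im; rewrite inE => i0.
  have last_off : m - 1 \in offsets i by rewrite /offsets !mem_cat !mem_iota; lia.
  apply: (@leq_ltn_trans (size (map (cshift i) (rem (m - 1) (offsets i))))); last first.
    by rewrite size_map size_rem // size_offsets; lia.
  apply: count_le_size (iota_uniq 0 m) _ => j; rewrite mem_iota => jm.
  move=> /andP [ij /and3P [_ _ j_off]]; apply/mapP; exists (coff i j); last by rewrite coffK.
  rewrite (rem_filter _ (offsets_uniq i)) mem_filter offsets_complete ?andbT //; last lia.
  by apply: contraTneq ij => ji; rewrite -(coffK im jm) ji /cshift; case: ifP; lia.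
exists chords; first by rewrite size_chords.
move=> i j ijm cij; have /andP [ij jm] := ijm; have im := ltn_trans ij jm.
have [min_ij max_ij] := (minn_idPl (ltnW ij), maxn_idPr (ltnW ij)).
have chord_ij : chord i (coff i j) = (i, j) by rewrite /chord /= coffK // min_ij max_ij.
have chord_ji : chord j (coff j i) = (i, j) by rewrite /chord /= coffK // minnC maxnC min_ij max_ij.
rewrite /chords mem_cat; case/or4P: (circulant_chord_cases ijm cij).
- by move=> ij_off; rewrite -chord_ij allpairs_f // mem_iota; lia.
- by move=> ji_off; rewrite -chord_ji allpairs_f // mem_iota; lia.
- case/and3P => /eqP -> id /eqP ij_diam; apply/orP; right; apply/mapP.
  by exists i; rewrite ?mem_iota // -ij_diam chord_ij.
- case/and3P => /eqP -> jd /eqP ji_diam; apply/orP; right; apply/mapP.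
  by exists j; rewrite ?mem_iota // -ji_diam chord_ji.
Qed.
End Circulant.

Lemma min_edges_is_intro n g k m (e : rel 'I_n) : in_class g k e -> nedges e <= m ->
  (forall e' : rel 'I_n, in_class g k e' -> m <= nedges e') -> min_edges_is n g k m.
Proof.
move=> e_class e_le m_le; split => //.
by exists e; split => //; apply/eqP; rewrite eqn_leq e_le m_le.
Qed.

Lemma min_edges_is_of_blocks n g k a b Ea Eb fa fb m :
  (forall e : rel 'I_n, in_class g k e -> m <= nedges e) ->
  rooted_block a g Ea [:: 0] fa -> rooted_block b g Eb [:: 0] fb ->
  0 < k -> 0 < g -> 0 < a -> 0 < b -> n = k + (a + b) -> k + 1 + Ea + Eb <= m ->
  min_edges_is n g k m.
Proof.
move=> m_le fa_block fb_block k_gt0 g_gt0 a_gt0 b_gt0 n_eq E_le.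
have f_block := rooted_block_sum fa_block fb_block.
have ab_split : 0 < a < a + b by lia.
have := glued_in_class k_gt0 n_eq f_block g_gt0 ab_split (@block_sum_split a fa fb).
move/min_edges_is_intro; apply=> //; apply: leq_trans (glued_nedges k_gt0 n_eq f_block) _.
by rewrite size_cat /=; lia.
Qed.

Theorem theorem4p1 (n g k : nat) :
  (1 <= g)%N -> (g <= (n - k - 2) %/ 2)%N ->
  (1 <= k)%N -> (k <= n - 2 * g - 2)%N ->
  (g = 1 -> min_edges_is n g k (n - 1)) /\
  (~~ odd (n - k) -> (2 <= g)%N ->
     min_edges_is n g k ((n - k) * g %/ 2 + k + 1)) /\
  (odd (n - k) -> (2 <= g)%N ->
     min_edges_is n g k (((n - k) * g + 1) %/ 2 + k + 1)).
Proof.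
move=> g_gt0 _ k_gt0 k_le.
have circulant_case : 2 <= g -> min_edges_is n g k (((n - k) * g + 1) %/ 2 + k + 1).
  move=> g_ge2; have g_eq : 2 * g./2 + odd g = g by rewrite -{3}[g]odd_double_half; lia.
  have circ m : g < m -> rooted_block m g ((m * g + 1) %/ 2) [:: 0] (circulant m g./2 (odd g)).
    by move=> gm; rewrite -{1 2}g_eq; apply: circulant_block; rewrite ?g_eq //; lia.
  (* [g.+1 * g] is even, so the two rounded-up halves add up to that of [(n - k) * g]. *)
  apply: (min_edges_is_of_blocks (@nedges_ge_in_class n g k)
            (circ g.+1 _) (circ (n - k - g.+1) _)); lia.
split; [move=> g1 | split => [nk_even | _] g_ge2; last exact: circulant_case].
  have tree_bound (e : rel 'I_n) : in_class g k e -> n - 1 <= nedges e.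
    by case=> [[e_sym _] [econ _]]; exact: nedges_ge_connected.
  subst g; apply: (min_edges_is_of_blocks tree_bound
                     (star_block (_ : 1 < 2)) (star_block (_ : 1 < n - k - 2))); lia.
have -> : (n - k) * g %/ 2 = ((n - k) * g + 1) %/ 2.
  by rewrite -[n - k]odd_double_half (negbTE nk_even) add0n -muln2 mulnAC; lia.
exact: circulant_case.
Qed.
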